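(* Let $S$ be an intra-regular $\Gamma$-AG$^{**}$-groupoid and $Q\subseteq S$ nonempty with $Q\Gamma Q\subseteq Q$. Then $Q$ is a $\Gamma$-quasi ideal of $S$ if and only if $S\Gamma Q\cap Q\Gamma S=Q$.
   Context: Let $S$ and $\Gamma$ be nonempty sets with a map $S\times\Gamma\times S\to S$, $(x,\gamma,y)\mapsto x\gamma y$. $S$ is a $\Gamma$-AG-groupoid if $(x\gamma y)\delta z=(z\gamma y)\delta x$ for all $x,y,z\in S$, $\gamma,\delta\in\Gamma$; it is a $\Gamma$-AG$^{**}$-groupoid if moreover $a\alpha(b\beta c)=b\alpha(a\beta c)$ for all $a,b,c\in S$, $\alpha,\beta\in\Gamma$. For subsets $A,B\subseteq S$, $A\Gamma B=\{a\gamma b: a\in A,\gamma\in\Gamma,b\in B\}$. $S$ is intra-regular if for every $a\in S$ there exist $x,y\in S$ and $\beta,\gamma,\delta\in\Gamma$ with $a=(x\beta(a\delta a))\gamma y$. A nonempty subset $Q$ with $Q\Gamma Q\subseteq Q$ is a $\Gamma$-quasi ideal if $S\Gamma Q\cap Q\Gamma S\subseteq Q$. *)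

Definition GammaAG {S G : Type} (op : S -> G -> S -> S) : Prop :=
  forall (x y z : S) (g d : G), op (op x g y) d z = op (op z g y) d x.

Definition GammaAGss {S G : Type} (op : S -> G -> S -> S) : Prop :=
  GammaAG op /\
  forall (a b c : S) (al be : G), op a al (op b be c) = op b al (op a be c).

Definition gprod {S G : Type} (op : S -> G -> S -> S) (A B : S -> Prop) : S -> Prop :=
  fun s => exists a g b, A a /\ B b /\ s = op a g b.

Definition full {S : Type} : S -> Prop := fun _ => True.

Definition intra_regular {S G : Type} (op : S -> G -> S -> S) : Prop :=
  forall a : S, exists (x y : S) (be ga de : G),
    a = op (op x be (op a de a)) ga y.

Definition subsetP {S : Type} (A B : S -> Prop) : Prop := forall s, A s -> B s.

Definition gquasi_ideal {S G : Type} (op : S -> G -> S -> S) (Q : S -> Prop) : Prop :=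
  (exists q, Q q) /\ subsetP (gprod op Q Q) Q /\
  subsetP (fun s => gprod op full Q s /\ gprod op Q full s) Q.

(* In an intra-regular Gamma-AG**-groupoid every element a lies in both
   S Gamma a and a Gamma S, so Q is always contained in S Gamma Q and
   Q Gamma S; the quasi-ideal inclusion is then the missing half of the
   equality.  The two factorisations come from rearranging
   a = (x b (a d a)) g y with the left invertive law and the AG** law;
   for a Gamma S one substitutes this very expression back for an
   occurrence of a. *)

Section IntraRegularFactorisations.

Variables (S G : Type) (op : S -> G -> S -> S).
Hypothesis hAG : GammaAGss op.
Hypothesis hIR : intra_regular op.

Lemma intra_regular_left_factor (a : S) : exists (s : S) (g : G), a = op s g a.
Proof.
  destruct hAG as [hL hA].
  destruct (hIR a) as [x [y [be [ga [de E]]]]].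
  exists (op y be (op x de a)), ga.
  transitivity (op (op x be (op a de a)) ga y); [exact E|].
  rewrite (hA x a a be de). apply hL.
Qed.

Lemma intra_regular_right_factor (a : S) : exists (s : S) (g : G), a = op a g s.
Proof.
  destruct hAG as [hL hA].
  destruct (hIR a) as [x [y [be [ga [de E]]]]].
  set (w := op x be (op a de a)).
  exists (op (op y be (op x de w)) ga y), ga.
  (* a g ((y b (x d w)) g y) = ((a g y) b (x d w)) g y
       = (x b (((w g y) d a))) g y = (x b (a d a)) g y = a *)
  rewrite <- (hA (op y be (op x de w)) a y ga ga).
  rewrite <- (hL (op a ga y) (op x de w) y be ga).
  rewrite <- (hA x (op a ga y) w be de).
  rewrite <- (hL w y a ga de).
  unfold w. rewrite <- E. exact E.
Qed.

Lemma intra_regular_sub_products (Q : S -> Prop) (a : S) :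
  Q a -> gprod op full Q a /\ gprod op Q full a.
Proof.
  intros Qa. split.
  - destruct (intra_regular_left_factor a) as [s [g Ea]].
    exists s, g, a. repeat split; assumption.
  - destruct (intra_regular_right_factor a) as [s [g Ea]].
    exists a, g, s. repeat split; assumption.
Qed.

End IntraRegularFactorisations.

Theorem mainTheorem8 (S G : Type) (op : S -> G -> S -> S)
  (hS : inhabited S) (hG : inhabited G)
  (hAG : GammaAGss op) (hIR : intra_regular op)
  (Q : S -> Prop) (hQne : exists q, Q q) (hQQ : subsetP (gprod op Q Q) Q) :
  gquasi_ideal op Q <->
  (forall s, (gprod op full Q s /\ gprod op Q full s) <-> Q s).
Proof.
  split.
  - intros [_ [_ hquasi]] s. split.
    + apply hquasi.
    + exact (@intra_regular_sub_products S G op hAG hIR Q s).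
  - intros heq. split; [exact hQne|]. split; [exact hQQ|].
    intros s Hs. apply heq; exact Hs.
Qed.
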